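(* Let $I$ be a ProbeTop-$k$ instance and let $(x,y)$ be a basic feasible solution of $\mathrm{LP}_{\mathtt{ptk}}(I)$. Then at most two components of $y=(y_i)_{i\in[n]}$ lie strictly between $0$ and $1$, and if exactly two components $y_{i_1},y_{i_2}$ are non-integral, then $y_{i_1}+y_{i_2}=1$.
   Context: $\mathrm{LP}_{\mathtt{ptk}}(I)$ for integers $1\le k\le T\le n$, values $r_1,\dots,r_J\ge 0$ and probabilities $q_{ij}\in[0,1]$ ($i\in[n],j\in[J]$, $\sum_j q_{ij}=1$) is the linear program in variables $x_{ij},y_i$: maximize $\sum_{i,j} r_j x_{ij}$ subject to $x_{ij}\le y_i q_{ij}$ for all $i,j$; $\sum_i y_i\le T$; $\sum_{i,j}x_{ij}\le k$; $x_{ij}\ge 0$; $0\le y_i\le 1$. *)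

From mathcomp Require Import all_boot all_order all_algebra.
Set Implicit Arguments. Unset Strict Implicit. Unset Printing Implicit Defensive.
Import Order.TTheory GRing.Theory Num.Theory.
Local Open Scope ring_scope.

Definition ptk_instance (R : realFieldType) (n J k T : nat)
  (r : 'I_J -> R) (q : 'I_n -> 'I_J -> R) : Prop :=
  [/\ [/\ (1 <= k)%N, (k <= T)%N & (T <= n)%N],
      (forall j, 0 <= r j),
      (forall i j, 0 <= q i j <= 1) &
      (forall i, \sum_(j < J) q i j = 1)].

Definition ptk_feasible (R : realFieldType) (n J k T : nat)
  (q : 'I_n -> 'I_J -> R) (x : 'I_n -> 'I_J -> R) (y : 'I_n -> R) : Prop :=
  [/\ (forall i j, x i j <= y i * q i j),
      \sum_(i < n) y i <= T%:R,
      \sum_(i < n) \sum_(j < J) x i j <= k%:R,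
      (forall i j, 0 <= x i j) &
      (forall i, 0 <= y i <= 1)].

(* Basic feasible solution: (x,y) is feasible and the constraints that are
   tight at (x,y) have full rank, i.e. the only direction (dx,dy) annihilated
   by the linear parts of all tight constraints is zero. *)
Definition ptk_bfs (R : realFieldType) (n J k T : nat)
  (q : 'I_n -> 'I_J -> R) (x : 'I_n -> 'I_J -> R) (y : 'I_n -> R) : Prop :=
  ptk_feasible k T q x y /\
  forall (dx : 'I_n -> 'I_J -> R) (dy : 'I_n -> R),
    (forall i j, x i j = y i * q i j -> dx i j = dy i * q i j) ->
    (\sum_(i < n) y i = T%:R -> \sum_(i < n) dy i = 0) ->
    (\sum_(i < n) \sum_(j < J) x i j = k%:R ->
       \sum_(i < n) \sum_(j < J) dx i j = 0) ->
    (forall i j, x i j = 0 -> dx i j = 0) ->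
    (forall i, y i = 0 -> dy i = 0) ->
    (forall i, y i = 1 -> dy i = 0) ->
    (forall i j, dx i j = 0) /\ (forall i, dy i = 0).

(* For any dy vanishing on the integral coordinates of y,
   put dx_ij = dy_i q_ij on the tight pairs x_ij = y_i q_ij and 0 elsewhere:
   this respects every tight constraint except possibly the two budgets, which
   see dy only through sum_i dy_i and sum_i c_i dy_i, where c_i is the mass of
   q_i on the tight pairs.  Three fractional coordinates would leave a nonzero
   such dy in the kernel of both forms.  With two, the second form alone has a
   nonzero kernel, so the budget T must be tight; the other coordinates being
   0 or 1, the two fractional values then sum to an integer in (0, 2). *)
From mathcomp Require Import all_boot all_order all_algebra.
From mathcomp Require Import ring lra zify.

Set Implicit Arguments.
Unset Strict Implicit.
Unset Printing Implicit Defensive.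
Import Order.TTheory GRing.Theory Num.Theory.
Local Open Scope ring_scope.

Lemma sum_delta_mul (I : finType) (R : pzSemiRingType) (a : I) (v : R)
    (w : I -> R) :
  \sum_i (v *+ (i == a)) * w i = v * w a.
Proof.
rewrite (bigD1 a) //= eqxx mulr1n big1 ?addr0 // => i /negPf ->.
by rewrite mulr0n mul0r.
Qed.

Lemma sum_01_natr (I : finType) (R : pzSemiRingType) (P : pred I)
    (f : I -> R) :
  (forall i, P i -> f i = 0 \/ f i = 1) ->
  exists m : nat, \sum_(i | P i) f i = m%:R.
Proof.
move=> f01; apply: (big_ind (fun s => exists m : nat, s = m%:R)).
- by exists 0%N.
- by move=> _ _ [m ->] [p ->]; exists (m + p)%N; rewrite natrD.
- by move=> i /f01 [] ->; [exists 0%N | exists 1%N].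
Qed.

Lemma natr_add_open02 (R : realDomainType) (m N : nat) (s : R) :
  m%:R + s = N%:R -> 0 < s < 2 -> s = 1.
Proof.
move=> msN /andP [s_gt0 s_lt2].
have ms : s = N%:R - m%:R by rewrite -msN addrC addKr.
have [mN | Nm] := leqP m N; last first.
  by move: s_gt0; rewrite ms subr_gt0 ltr_nat ltnNge (ltnW Nm).
move: s_gt0 s_lt2; rewrite ms -natrB // ltr0n ltr_nat => ? ?.
by have -> : (N - m = 1)%N by lia.
Qed.

Lemma unit_interval_nfrac (R : numDomainType) (v : R) :
  0 <= v <= 1 -> ~~ (0 < v < 1) -> v = 0 \/ v = 1.
Proof.
case/andP; rewrite !le_eqVlt => /orP [/eqP <-|v_gt0]; first by left.
by case/orP => [/eqP ->|v_lt1]; [right | rewrite v_gt0 v_lt1].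
Qed.

Lemma card_le2_no_triple (I : finType) (A : {set I}) :
  (forall a b c, a \in A -> b \in A -> c \in A ->
     a != b -> a != c -> b != c -> False) ->
  (#|A| <= 2)%N.
Proof.
move=> no_triple; rewrite leqNgt; apply/negP => A_gt2.
have /card_gt0P [a aA] : (0 < #|A|)%N by lia.
have Aa_gt1 : (1 < #|A :\ a|)%N by move: A_gt2; rewrite (cardsD1 a A) aA; lia.
have /card_gt0P [b bAa] : (0 < #|A :\ a|)%N by lia.
have /card_gt0P [c cAab] : (0 < #|A :\ a :\ b|)%N.
  by move: Aa_gt1; rewrite (cardsD1 b (A :\ a)) bAa; lia.
move: bAa cAab; rewrite !inE => /andP [ba bA] /and3P [cb ca cA].
by apply: (no_triple a b c) => //; rewrite eq_sym.
Qed.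

Section BasicFeasibleSolution.
Variables (R : realFieldType) (n J k T : nat).
Variables (q x : 'I_n -> 'I_J -> R) (y : 'I_n -> R).
Hypothesis bfs : ptk_bfs k T q x y.

Definition tight_mass (i : 'I_n) : R :=
  \sum_(j < J) (if x i j == y i * q i j then q i j else 0).

Lemma bfs_y01 i : 0 <= y i <= 1.
Proof. by case: bfs => -[]. Qed.

Lemma bfs_fractional_direction_eq0 (dy : 'I_n -> R) :
  (forall i, ~~ (0 < y i < 1) -> dy i = 0) ->
  (\sum_(i < n) y i = T%:R -> \sum_(i < n) dy i = 0) ->
  \sum_(i < n) dy i * tight_mass i = 0 ->
  forall i, dy i = 0.
Proof.
move=> dy_supp dy_T dy_k; case: bfs => _ bfs_dir.
pose dx i j := if x i j == y i * q i j then dy i * q i j else 0.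
have [] // := bfs_dir dx dy.
- by move=> i j xij; rewrite /dx xij eqxx.
- move=> _; rewrite -[RHS]dy_k; apply: eq_bigr => i _.
  rewrite /tight_mass mulr_sumr; apply: eq_bigr => j _; rewrite /dx.
  by case: ifP; rewrite ?mulr0.
- (* x_ij = 0 is tight at x_ij = y_i q_ij only if y_i = 0 or q_ij = 0 *)
  move=> i j xij0; rewrite /dx; case: eqP => // /esym/eqP.
  rewrite xij0 mulf_eq0 => /orP [/eqP yi0|/eqP ->]; last by rewrite mulr0.
  by rewrite dy_supp ?mul0r // yi0 ltxx.
- by move=> i yi0; apply: dy_supp; rewrite yi0 ltxx.
- by move=> i yi1; apply: dy_supp; rewrite yi1 ltxx andbF.
Qed.

Lemma bfs_pair_weights_eq0 a b (va vb : R) :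
  a != b -> 0 < y a < 1 -> 0 < y b < 1 ->
  (\sum_(i < n) y i = T%:R -> va + vb = 0) ->
  va * tight_mass a + vb * tight_mass b = 0 ->
  va = 0 /\ vb = 0.
Proof.
move=> ab ya yb vT vk.
pose dy i := va *+ (i == a) + vb *+ (i == b).
have dy_sum w : \sum_i dy i * w i = va * w a + vb * w b.
  by rewrite -!sum_delta_mul -big_split; apply: eq_bigr => i _; rewrite mulrDl.
have dy_total : \sum_i dy i = va + vb.
  rewrite -[va]mulr1 -[vb]mulr1 -(dy_sum (fun=> 1)).
  by apply: eq_bigr => i _; rewrite mulr1.
have dy_eq0 : forall i, dy i = 0.
  apply: bfs_fractional_direction_eq0; last by rewrite dy_sum.
  - move=> i yi; rewrite /dy.
    have [ia | ia] := eqVneq i a; first by rewrite ia ya in yi.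
    have [ib | ib] := eqVneq i b; first by rewrite ib yb in yi.
    by rewrite !mulr0n addr0.
  - by rewrite dy_total.
move: (dy_eq0 a) (dy_eq0 b).
by rewrite /dy !eqxx (negPf ab) eq_sym (negPf ab) !mulr0n addr0 add0r.
Qed.

Lemma bfs_triple_weights_eq0 a b c (va vb vc : R) :
  a != b -> a != c -> b != c ->
  0 < y a < 1 -> 0 < y b < 1 -> 0 < y c < 1 ->
  va + vb + vc = 0 ->
  va * tight_mass a + vb * tight_mass b + vc * tight_mass c = 0 ->
  [/\ va = 0, vb = 0 & vc = 0].
Proof.
move=> ab ac bc ya yb yc vT vk.
pose dy i := va *+ (i == a) + vb *+ (i == b) + vc *+ (i == c).
have dy_sum w : \sum_i dy i * w i = va * w a + vb * w b + vc * w c.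
  rewrite -!sum_delta_mul -!big_split; apply: eq_bigr => i _.
  by rewrite !mulrDl.
have dy_eq0 : forall i, dy i = 0.
  apply: bfs_fractional_direction_eq0; last by rewrite dy_sum.
  - move=> i yi; rewrite /dy.
    have [ia | ia] := eqVneq i a; first by rewrite ia ya in yi.
    have [ib | ib] := eqVneq i b; first by rewrite ib yb in yi.
    have [ic | ic] := eqVneq i c; first by rewrite ic yc in yi.
    by rewrite !mulr0n !addr0.
  - move=> _; rewrite -[RHS]vT -[va]mulr1 -[vb]mulr1 -[vc]mulr1.
    rewrite -(dy_sum (fun=> 1)).
    by apply: eq_bigr => i _; rewrite mulr1.
move: (dy_eq0 a) (dy_eq0 b) (dy_eq0 c).
rewrite /dy !eqxx ![_ == a]eq_sym [c == b]eq_sym.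
by rewrite (negPf ab) (negPf ac) (negPf bc) !mulr0n !addr0 !add0r.
Qed.

Lemma bfs_no_fractional_triple a b c :
  a != b -> a != c -> b != c ->
  0 < y a < 1 -> 0 < y b < 1 -> 0 < y c < 1 -> False.
Proof.
move=> ab ac bc ya yb yc.
set ca := tight_mass a; set cb := tight_mass b; set cc := tight_mass c.
have [ca_cb | ca_ncb] := eqVneq ca cb.
  have [] := @bfs_triple_weights_eq0 a b c 1 (-1) 0 ab ac bc ya yb yc.
  - by rewrite addrN addr0.
  - by rewrite -/ca -/cb ca_cb; ring.
  by move/eqP; rewrite oner_eq0.
have [_ _ /eqP] := @bfs_triple_weights_eq0 a b c (cb - cc) (cc - ca) (ca - cb)
  ab ac bc ya yb yc ltac:(ring) ltac:(rewrite -/ca -/cb -/cc; ring).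
by rewrite subr_eq0 (negPf ca_ncb).
Qed.

Lemma bfs_fractional_pair_budget_tight a b :
  a != b -> 0 < y a < 1 -> 0 < y b < 1 -> \sum_(i < n) y i = T%:R.
Proof.
move=> ab ya yb; have [//|y_nT] := eqVneq (\sum_(i < n) y i) T%:R.
have no_T (P : Prop) : \sum_(i < n) y i = T%:R -> P.
  by move/eqP; rewrite (negPf y_nT).
set ca := tight_mass a; set cb := tight_mass b.
have [ca0 | ca_n0] := eqVneq ca 0.
  have [] := @bfs_pair_weights_eq0 a b 1 0 ab ya yb (no_T _)
    ltac:(rewrite -/ca ca0; ring).
  by move/eqP; rewrite oner_eq0.
have [_ /eqP] := @bfs_pair_weights_eq0 a b cb (- ca) ab ya yb (no_T _)
  ltac:(rewrite -/ca -/cb; ring).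
by rewrite oppr_eq0 (negPf ca_n0).
Qed.

Lemma bfs_fractional_pair_sum a b :
  a != b -> 0 < y a < 1 -> 0 < y b < 1 -> y a + y b = 1.
Proof.
move=> ab ya yb.
have others i : (i != a) && (i != b) -> y i = 0 \/ y i = 1.
  case/andP=> ia ib; apply: unit_interval_nfrac (bfs_y01 i) _; apply/negP => yi.
  by apply: (bfs_no_fractional_triple ab _ _ ya yb yi); rewrite eq_sym.
have [m sum_m] := sum_01_natr others.
apply: (@natr_add_open02 _ m T).
  rewrite -(bfs_fractional_pair_budget_tight ab ya yb) (bigD1 a) //=.
  by rewrite (bigD1 b) 1?eq_sym //= -sum_m [LHS]addrC -addrA.
by move: ya yb => /andP [? ?] /andP [? ?]; lra.
Qed.

End BasicFeasibleSolution.

Theorem lemma4p2 (R : realFieldType) (n J k T : nat)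
  (r : 'I_J -> R) (q : 'I_n -> 'I_J -> R)
  (x : 'I_n -> 'I_J -> R) (y : 'I_n -> R) :
  ptk_instance k T r q ->
  ptk_bfs k T q x y ->
  (#|[set i | (0 < y i < 1)%R]| <= 2)%N /\
  (#|[set i | (0 < y i < 1)%R]| = 2%N ->
     forall i1 i2 : 'I_n, i1 != i2 ->
       0 < y i1 < 1 -> 0 < y i2 < 1 -> y i1 + y i2 = 1).
Proof.
move=> _ bfs; split => [|_ i1 i2 i12 yi1 yi2].
  apply: card_le2_no_triple => a b c; rewrite !inE => ya yb yc ab ac bc.
  exact: (bfs_no_fractional_triple bfs ab ac bc ya yb yc).
exact: (bfs_fractional_pair_sum bfs i12 yi1 yi2).
Qed.
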